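(* Let $\sigma$ and $\tau$ be two $\mu$-rigid strategies on an arena $A$. If $\mathrm{GR}(\sigma)=\mathrm{GR}(\tau)$ then $\sigma=\tau$.
   Context: First-order variables are split into three disjoint countable sets: $\mathcal A$-, $\mathcal O$- and $\mathcal P$-variables. $\mathcal{AP}$-terms (resp. $\mathcal{OP}$-terms) are first-order terms built from $\mathcal A$- and $\mathcal P$-variables (resp. $\mathcal O$- and $\mathcal P$-variables). Arena: a finite forest whose nodes (moves) carry a first-order label (a list of $\mathcal A$-variables, all distinct across the arena) and an atomic label (a list of atomic formulas $X\,t_1\dots t_k$ with $\mathcal{AP}$-terms whose $\mathcal A$-variables occur in the first-order label of the node or an ancestor). Polarity is depth parity: even = Opponent (O), odd = Player (P); roots are initial. Justified sequence: finite sequence of move occurrences; each non-initial occurrence has a $\lambda$-pointer to an earlier occurrence of its father; each element of the atomic label of an occurrence has at most one $\mu$-pointer to an element of the atomic label of an earlier occurrence of opposite polarity. Instantiations: each O-move occurrence carries an $\mathcal O$-instantiation (list of $\mathcal O$-variables of the length of its first-order label), each P-move occurrence a $\mathcal P$-instantiation (list of $\mathcal{OP}$-terms of that length); all $\mathcal O$-variables in $\mathcal O$-instantiations distinct. For an occurrence $m$ with instantiation $[t_1..t_k]$ and first-order label $[x_1..x_k]$, $\theta_m=\{x_i\mapsto t_i\}$ if $m$ is initial, else $\theta_n\cup\{x_i\mapsto t_i\}$ with $n$ its $\lambda$-justifier. Play: instantiated justified sequence with alternating polarities, no $\mu$-pointers from O-moves, exactly one $\mu$-pointer from each element of the atomic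 label of each P-move, every $\mu$-pointer from $X\,t_1..t_k$ at $m$ to $Y\,u_1..u_p$ at $n$ satisfying $X=Y$, $k=p$, $t_i\theta_m=u_i\theta_n$, and every $\mathcal O$-variable in a $\mathcal P$-instantiation occurring in an earlier $\mathcal O$-instantiation. An $\mathcal O$-renaming is an injection $\varsigma$ of $\mathcal O$-variables into themselves; $s\varsigma$ replaces each $o$ by $\varsigma(o)$ in all instantiations. Strategy: non-empty set of even-length plays closed under even-length prefixes, deterministic ($sm,sn\in\sigma\Rightarrow sm=sn$, including pointers and instantiations) and uniform (closed under $\mathcal O$-renamings). A play is $\mu$-rigid if for every Player move occurrence: its atomic label has the same length as that of the immediately preceding move, each of its $\mu$-pointers goes to the corresponding element (same position) of the atomic label of the immediately preceding move, and its instantiation equals the instantiation of the immediately preceding move. A strategy is $\mu$-rigid if all its plays are. $\mathrm{GR}(s)$ erases all instantiations and $\mu$-pointers from a play $s$ (keeping moves and $\lambda$-pointers); $\mathrm{GR}(\sigma)=\{\mathrm{GR}(s)\mid s\in\sigma\}$. *)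

From mathcomp Require Import all_boot.
Set Implicit Arguments. Unset Strict Implicit. Unset Printing Implicit Defensive.

Inductive var := VA of nat | VO of nat | VP of nat.

Definition ovar (v : var) : option nat := if v is VO o then Some o else None.
Definition is_Avar (v : var) : bool := if v is VA _ then true else false.
Definition is_Ovarv (v : var) : bool := if v is VO _ then true else false.

Section Games.
Variable F : Type.
Variable ar : F -> nat.

Inductive term := TVar of var | TApp of F & seq term.

Fixpoint term_vars (t : term) : seq var :=
  match t with TVar v => [:: v] | TApp _ ts => flatten (map term_vars ts) end.

Fixpoint wf_term (t : term) : bool :=
  match t with TVar _ => true | TApp f ts => (size ts == ar f) && all wf_term ts end.

Definition is_AP (t : term) : bool := wf_term t && all (fun v => ~~ is_Ovarv v) (term_vars t).
Definition is_OP (t : term) : bool := wf_term t && all (fun v => ~~ is_Avar v) (term_vars t).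
Definition is_Ovar (t : term) : bool := if t is TVar (VO _) then true else false.

Definition ovars (t : term) : seq nat := pmap ovar (term_vars t).
Definition ovars_inst (ts : seq term) : seq nat := flatten (map ovars ts).

Fixpoint assoc (x : nat) (th : seq (nat * term)) : option term :=
  match th with [::] => None | (y, u) :: th' => if x == y then Some u else assoc x th' end.

Fixpoint subst (th : seq (nat * term)) (t : term) : term :=
  match t with
  | TVar (VA x) => if assoc x th is Some u then u else t
  | TVar _ => t
  | TApp f ts => TApp f (map (subst th) ts)
  end.

Fixpoint rename (r : nat -> nat) (t : term) : term :=
  match t with
  | TVar (VO o) => TVar (VO (r o))
  | TVar _ => t
  | TApp f ts => TApp f (map (rename r) ts)
  end.

(* atomic formula X t1 .. tk : (X, [:: t1; ..; tk]) *)
Definition atom := (nat * seq term)%type.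
Definition atom0 : atom := (0, [::]).

(* Arena: moves are 0 .. a_size-1; a_father gives the father (None = root). *)
Record arena := Arena {
  a_size : nat;
  a_father : nat -> option nat;
  a_fo : nat -> seq nat;          (* first-order label: list of A-variables *)
  a_at : nat -> seq atom
}.

Fixpoint depth_aux (A : arena) (fuel m : nat) : nat :=
  match fuel with
  | 0 => 0
  | S f => if a_father A m is Some p then (depth_aux A f p).+1 else 0
  end.
Definition depth A m := depth_aux A m.+1 m.
Definition is_O_move A m : bool := ~~ odd (depth A m).

Fixpoint anc_aux (A : arena) (fuel m : nat) : seq nat :=
  match fuel with
  | 0 => [::]
  | S f => m :: (if a_father A m is Some p then anc_aux A f p else [::])
  end.
Definition ancestors A m := anc_aux A m.+1 m.

Definition wf_arena (A : arena) : Prop :=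
  [/\ (* finite forest (nodes numbered so that fathers come first) *)
      (forall m p, m < a_size A -> a_father A m = Some p -> p < m),
      uniq (flatten [seq a_fo A m | m <- iota 0 (a_size A)]) &
      (forall m, m < a_size A ->
         all (fun a : atom => all (fun t => is_AP t &&
              all (fun v => if v is VA x then has (fun n => x \in a_fo A n) (ancestors A m)
                            else true) (term_vars t)) a.2) (a_at A m))].

(* A move occurrence: the move, its lambda-pointer (index of an earlier
   occurrence), one optional mu-pointer per element of the atomic label
   (pair: index of earlier occurrence, position in its atomic label), and
   its instantiation. *)
Record occ := Occ {
  o_move : nat;
  o_lam : option nat;
  o_mu : seq (option (nat * nat));
  o_inst : seq term
}.
Definition occ0 : occ := Occ 0 None [::] [::].

Section Seq.
Variable A : arena.

Definition at_of (s : seq occ) (i : nat) : seq atom := a_at A (o_move (nth occ0 s i)).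
Definition pol (s : seq occ) (i : nat) : bool := is_O_move A (o_move (nth occ0 s i)).

Definition inst_jseq (s : seq occ) : Prop :=
  (forall i, i < size s ->
     let o := nth occ0 s i in
     [/\ o_move o < a_size A /\
         (match a_father A (o_move o) with
          | None => o_lam o = None
          | Some p => exists2 j, o_lam o = Some j & j < i /\ o_move (nth occ0 s j) = p
          end),
         size (o_mu o) = size (a_at A (o_move o)),
         (forall k jl, nth None (o_mu o) k = Some jl ->
             [/\ jl.1 < i, jl.2 < size (at_of s jl.1) & pol s jl.1 != pol s i]),
         size (o_inst o) = size (a_fo A (o_move o)) &
         (if pol s i then all is_Ovar (o_inst o) else all is_OP (o_inst o))])
  /\ uniq (flatten [seq (if is_O_move A (o_move o) then ovars_inst (o_inst o) else [::]) | o <- s]).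

Fixpoint theta_aux (s : seq occ) (fuel i : nat) : seq (nat * term) :=
  match fuel with
  | 0 => [::]
  | S f => let o := nth occ0 s i in
      zip (a_fo A (o_move o)) (o_inst o) ++
      (if o_lam o is Some j then theta_aux s f j else [::])
  end.
Definition theta (s : seq occ) (i : nat) := theta_aux s i.+1 i.

Definition play (s : seq occ) : Prop :=
  [/\ inst_jseq s,
      (forall i, i.+1 < size s -> pol s i != pol s i.+1),
      (forall i, i < size s ->
         if pol s i then all (fun x => ~~ isSome x) (o_mu (nth occ0 s i))
         else all isSome (o_mu (nth occ0 s i))),
      (forall i k j l, i < size s -> nth None (o_mu (nth occ0 s i)) k = Some (j, l) ->
         let a := nth atom0 (at_of s i) k in
         let b := nth atom0 (at_of s j) l in
         [/\ a.1 = b.1, size a.2 = size b.2 &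
             map (subst (theta s i)) a.2 = map (subst (theta s j)) b.2]) &
      (forall i o, i < size s -> ~~ pol s i -> o \in ovars_inst (o_inst (nth occ0 s i)) ->
         exists j, [/\ j < i, pol s j & o \in ovars_inst (o_inst (nth occ0 s j))])].

Definition rename_occ (r : nat -> nat) (o : occ) : occ :=
  Occ (o_move o) (o_lam o) (o_mu o) (map (rename r) (o_inst o)).

Definition strategy (sigma : seq occ -> Prop) : Prop :=
  [/\ exists s, sigma s,
      (forall s, sigma s -> play s /\ ~~ odd (size s)),
      (forall s k, sigma s -> ~~ odd k -> k <= size s -> sigma (take k s)),
      (forall s m n, sigma (rcons s m) -> sigma (rcons s n) -> m = n) &
      (forall (r : nat -> nat) s, injective r -> sigma s -> sigma (map (rename_occ r) s))].

Definition mu_rigid_play (s : seq occ) : Prop :=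
  forall i, i.+1 < size s -> ~~ pol s i.+1 ->
    [/\ size (at_of s i.+1) = size (at_of s i),
        o_mu (nth occ0 s i.+1) = [seq Some (i, k) | k <- iota 0 (size (at_of s i))] &
        o_inst (nth occ0 s i.+1) = o_inst (nth occ0 s i)].

Definition mu_rigid (sigma : seq occ -> Prop) : Prop :=
  forall s, sigma s -> mu_rigid_play s.

End Seq.

Definition GR_play (s : seq occ) : seq (nat * option nat) :=
  [seq (o_move o, o_lam o) | o <- s].
Definition GR (sigma : seq occ -> Prop) : seq (nat * option nat) -> Prop :=
  fun g => exists2 s, sigma s & GR_play s = g.

End Games.

From mathcomp Require Import all_boot.
Set Implicit Arguments. Unset Strict Implicit. Unset Printing Implicit Defensive.

(** Two mu-rigid plays with the same underlying justified sequence differ only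
    by an O-renaming.  Indeed, O-occurrences carry no mu-pointers and are
    instantiated by pairwise distinct O-variables, so one injection of O-variables
    matches all O-occurrences at once; P-occurrences of a mu-rigid play are then
    forced, since their mu-pointers and instantiation copy the preceding
    O-occurrence.  Hence each play of sigma is an O-renaming of a play of tau, and
    tau, being uniform, contains it. *)

Lemma injective_extension (a b : seq nat) :
  uniq a -> uniq b -> size a = size b ->
  exists2 r : nat -> nat, injective r & map r a = b.
Proof.
move=> uniq_a uniq_b size_ab.
pose N := (\max_(y <- b) y).+1.
have lt_b_N y : y \in b -> y < N by move=> yb; rewrite ltnS; apply: leq_bigmax_seq.
have nth_b_lt x : x \in a -> nth 0 b (index x a) < N.
  by move=> xa; apply: lt_b_N; rewrite mem_nth // -size_ab index_mem.
exists (fun x => if x \in a then nth 0 b (index x a) else x + N); last first.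
  apply: (eq_from_nth (x0 := 0)); rewrite size_map // => i lt_i.
  by rewrite (nth_map 0) // mem_nth // index_uniq.
move=> x y /=; case xa: (x \in a); case ya: (y \in a).
- move=> /eqP; rewrite nth_uniq -?size_ab ?index_mem // => /eqP eq_xy.
  by rewrite -(nth_index 0 xa) -(nth_index 0 ya) eq_xy.
- by move=> eq_xy; have := nth_b_lt x xa; rewrite eq_xy ltnNge leq_addl.
- by move=> eq_xy; have := nth_b_lt y ya; rewrite -eq_xy ltnNge leq_addl.
- exact: addIn.
Qed.

Lemma map_shape_flatten (T U : Type) (f : T -> U) (ss : seq (seq T)) ss' :
  shape ss = shape ss' -> map f (flatten ss) = flatten ss' -> map (map f) ss = ss'.
Proof. by move=> eq_sh eq_fl; rewrite -[ss]flattenK map_reshape eq_fl eq_sh flattenK. Qed.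

Lemma all_is_OvarE (F : Type) (l : seq (term F)) :
  all (@is_Ovar F) l -> l = [seq @TVar F (VO o) | o <- ovars_inst l].
Proof.
elim: l => //= t l IHl /andP [+ /IHl {1}->].
by case: t => // [[]] // o.
Qed.

Lemma all_isNone (T : Type) (l : seq (option T)) :
  all (fun x => ~~ isSome x) l -> l = nseq (size l) None.
Proof. by elim: l => //= [[]] // l IHl /IHl {1}->. Qed.

Section RigidPlays.
Variables (F : Type) (ar : F -> nat) (A : arena F).
Implicit Types s t : seq (occ F).

Local Notation occ0 := (@occ0 F).

(* [inst_jseq] requires the concatenation of these lists to be duplicate-free. *)
Definition O_vars s : seq (seq nat) :=
  [seq (if is_O_move A (o_move o) then ovars_inst (o_inst o) else [::]) | o <- s].

Lemma nth_O_vars s i : i < size s -> pol A s i ->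
  nth [::] (O_vars s) i = ovars_inst (o_inst (nth occ0 s i)).
Proof. by move=> lt_i; rewrite /pol (nth_map occ0) // => ->. Qed.

Lemma O_inst_vars s i : inst_jseq ar A s -> i < size s -> pol A s i ->
  o_inst (nth occ0 s i) = [seq @TVar F (VO o) | o <- nth [::] (O_vars s) i].
Proof.
move=> [js _] lt_i Oi; have [_ _ _ _] := js i lt_i; rewrite Oi nth_O_vars //.
exact: all_is_OvarE.
Qed.

Lemma pol_play0 s : play ar A s -> 0 < size s -> pol A s 0.
Proof.
case=> [[js _] _ _ _ _] /js [[_ +] _ _ _ _].
rewrite /pol /is_O_move /depth /=.
by case: (a_father A _) => // p [j _ []].
Qed.

Lemma size_nth_O_vars s i : inst_jseq ar A s -> i < size s ->
  size (nth [::] (O_vars s) i) =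
  if pol A s i then size (a_fo A (o_move (nth occ0 s i))) else 0.
Proof.
move=> js lt_i; case: ifP => Oi; last by rewrite (nth_map occ0) // -/(pol A s i) Oi.
have [_ _ _ size_inst _] := js.1 i lt_i.
by rewrite -size_inst (O_inst_vars js) ?size_map.
Qed.

Lemma play_O_mu s i : play ar A s -> i < size s -> pol A s i ->
  o_mu (nth occ0 s i) = nseq (size (a_at A (o_move (nth occ0 s i)))) None.
Proof.
case=> [[js _] _ mu_s _ _] lt_i Oi; have [_ size_mu _ _ _] := js i lt_i.
by have := mu_s i lt_i; rewrite Oi -size_mu => /all_isNone.
Qed.

Lemma play_P_pred s i : play ar A s -> i < size s -> ~~ pol A s i ->
  exists2 j, i = j.+1 & pol A s j.
Proof.
move=> ps; case: i => [|j] lt_i Pi; first by rewrite pol_play0 in Pi.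
case: ps => _ alt_s _ _ _; exists j => //.
by have := alt_s j lt_i; rewrite (negbTE Pi); case: (pol A s j).
Qed.

Section SameGR.
Variables s t : seq (occ F).
Hypothesis GR_st : GR_play s = GR_play t.

Lemma size_GR_eq : size s = size t.
Proof. by rewrite -(size_map (fun o => (o_move o, o_lam o)) s) -/(GR_play s) GR_st size_map. Qed.

Lemma nth_GR_eq i : i < size s ->
  o_move (nth occ0 s i) = o_move (nth occ0 t i) /\
  o_lam (nth occ0 s i) = o_lam (nth occ0 t i).
Proof.
move=> lt_i; have := congr1 (fun g => nth (0, None) g i) GR_st.
by rewrite /GR_play !(nth_map occ0) -?size_GR_eq // => -[-> ->].
Qed.

Lemma pol_GR_eq i : i < size s -> pol A s i = pol A t i.
Proof. by move=> /nth_GR_eq [eq_m _]; rewrite /pol eq_m. Qed.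

Lemma shape_O_vars : inst_jseq ar A s -> inst_jseq ar A t ->
  shape (O_vars s) = shape (O_vars t).
Proof.
move=> js jt; apply: (eq_from_nth (x0 := 0)); first by rewrite !size_map size_GR_eq.
rewrite !size_map => i lt_is; have lt_it : i < size t by rewrite -size_GR_eq.
rewrite !(nth_map [::]) ?size_map // !size_nth_O_vars // pol_GR_eq //.
by have [-> _] := nth_GR_eq lt_is.
Qed.

Lemma O_renaming : inst_jseq ar A s -> inst_jseq ar A t ->
  exists2 r, injective r & forall i, i < size s -> pol A s i ->
    map (rename r) (o_inst (nth occ0 t i)) = o_inst (nth occ0 s i).
Proof.
move=> js jt.
have [r inj_r map_r] : exists2 r, injective r &
    map r (flatten (O_vars t)) = flatten (O_vars s).
  by apply: injective_extension; [exact: jt.2 | exact: js.2 |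
    rewrite !size_flatten shape_O_vars].
have map_rr := map_shape_flatten (esym (shape_O_vars js jt)) map_r.
exists r => // i lt_is Oi; have lt_it : i < size t by rewrite -size_GR_eq.
have Oi' : pol A t i by rewrite -pol_GR_eq.
rewrite (O_inst_vars jt) // (O_inst_vars js) // -map_rr (nth_map [::]) ?size_map //.
by rewrite -!map_comp.
Qed.

Lemma rigid_plays_renaming : play ar A s -> play ar A t ->
  mu_rigid_play A s -> mu_rigid_play A t ->
  exists2 r, injective r & map (rename_occ r) t = s.
Proof.
move=> ps pt rs rt; have [[js _ _ _ _] [jt _ _ _ _]] := (ps, pt).
have [r inj_r O_inst] := O_renaming js jt.
exists r => //; apply: (eq_from_nth (x0 := occ0)); first by rewrite size_map size_GR_eq.
rewrite size_map -size_GR_eq => i lt_is; have lt_it : i < size t by rewrite -size_GR_eq.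
have [eq_move eq_lam] := nth_GR_eq lt_is.
have [eq_mu eq_inst] : o_mu (nth occ0 t i) = o_mu (nth occ0 s i) /\
    map (rename r) (o_inst (nth occ0 t i)) = o_inst (nth occ0 s i).
  case Oi: (pol A s i).
    have Oi' : pol A t i by rewrite -pol_GR_eq.
    by rewrite !play_O_mu // eq_move O_inst.
  have [j ij Oj] := play_P_pred ps lt_is (negbT Oi); subst i.
  have Pj' : ~~ pol A t j.+1 by rewrite -pol_GR_eq ?Oi.
  have [_ mu_s inst_s] := rs j lt_is (negbT Oi).
  have [_ mu_t inst_t] := rt j lt_it Pj'.
  have [eq_mj _] := nth_GR_eq (ltnW lt_is).
  by rewrite mu_s mu_t inst_s inst_t /at_of eq_mj O_inst // ltnW.
rewrite (nth_map occ0) //; move: eq_move eq_lam eq_mu eq_inst.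
by case: (nth occ0 s i) => ????; case: (nth occ0 t i) => ???? /= <- <- <- <-.
Qed.

End SameGR.

Lemma GR_strategy_sub sigma tau : strategy ar A sigma -> strategy ar A tau ->
  mu_rigid A sigma -> mu_rigid A tau ->
  (forall g, GR sigma g -> GR tau g) -> forall s, sigma s -> tau s.
Proof.
move=> [_ sigma_play _ _ _] [_ tau_play _ _ tau_uniform] rsigma rtau GR_sub s sigma_s.
have [t tau_t GR_ts] := GR_sub _ (ex_intro2 _ _ s sigma_s erefl).
have [r inj_r <-] := rigid_plays_renaming (esym GR_ts) (sigma_play s sigma_s).1
  (tau_play t tau_t).1 (rsigma s sigma_s) (rtau t tau_t).
exact: tau_uniform.
Qed.

End RigidPlays.

Theorem mainTheorem10 (F : Type) (ar : F -> nat) (A : arena F)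
    (sigma tau : seq (occ F) -> Prop) :
  wf_arena ar A ->
  strategy ar A sigma -> strategy ar A tau ->
  mu_rigid A sigma -> mu_rigid A tau ->
  (forall g, GR sigma g <-> GR tau g) ->
  forall s, sigma s <-> tau s.
Proof.
move=> _ sigma_strat tau_strat rsigma rtau eq_GR s.
by split; apply: (GR_strategy_sub (ar := ar) (A := A)) => // g /eq_GR.
Qed.
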